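(* Let $A,B,C,D$ be pairwise intersecting compact convex sets in the plane. If $o(ABC)=o(ABD)=0$ but $o(ACD)\ne0$ and $o(BCD)\ne0$, then $o(ACD)=o(BCD)$.
   Context: For three pairwise intersecting compact convex sets $X,Y,Z$ in the plane: $o(XYZ)=0$ if $X\cap Y\cap Z\neq\emptyset$; otherwise $o(XYZ)=o(xyz)$ for any $x\in Y\cap Z$, $y\in X\cap Z$, $z\in X\cap Y$, where for points $o(xyz)=+1$ for a counterclockwise and $-1$ for a clockwise triangle (independent of the choice). *)

From HB Require Import structures.
From mathcomp Require Import all_boot all_order all_algebra.
From mathcomp Require Import all_classical all_reals topology normedtype.
Set Implicit Arguments. Unset Strict Implicit. Unset Printing Implicit Defensive.
Import Order.TTheory GRing.Theory Num.Theory numFieldNormedType.Exports.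
Local Open Scope classical_set_scope.
Local Open Scope ring_scope.

Section Plane.
Variable R : realType.
Notation pt := (R * R)%type.

Definition convex_set (A : set pt) : Prop :=
  forall x y : pt, A x -> A y -> forall t : R, 0 <= t -> t <= 1 ->
    A ((1 - t) * x.1 + t * y.1, (1 - t) * x.2 + t * y.2).

Definition compact_convex (A : set pt) : Prop := compact A /\ convex_set A.

(* twice the signed area of triangle xyz *)
Definition det3 (x y z : pt) : R :=
  (y.1 - x.1) * (z.2 - x.2) - (y.2 - x.2) * (z.1 - x.1).

(* orientation of points: +1 ccw, -1 cw, 0 degenerate *)
Definition opt (x y z : pt) : int := sgz (det3 x y z).

(* orientation of three sets: 0 if they share a point, otherwise the
   orientation of (some chosen) x in Y∩Z, y in X∩Z, z in X∩Y *)
Definition oset (X Y Z : set pt) : int :=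
  if `[< exists p, X p /\ Y p /\ Z p >] then 0
  else opt (get (Y `&` Z)) (get (X `&` Z)) (get (X `&` Y)).

End Plane.

From HB Require Import structures.
From mathcomp Require Import all_boot all_order all_algebra.
From mathcomp Require Import all_classical all_reals topology normedtype.
From mathcomp Require Import ring lra.
Import Order.TTheory GRing.Theory Num.Theory numFieldNormedType.Exports.
Local Open Scope classical_set_scope.
Local Open Scope ring_scope.

(* C and D meet at some x, while A, B, C meet at p and A, B, D at q: orientation
   0 forces a common point, since representatives of the pairwise intersections
   of convex sets without a common point are never collinear (one of three
   collinear points lies between the other two, and convexity makes it a common
   point). Now (x, q, p) is a legal choice of representatives both for o(ACD)
   and for o(BCD), so both equal o(xqp). This uses that the orientation does not
   depend on the choice: moving one representative along a segment inside its
   pairwise intersection changes the determinant affinely without ever hitting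
   0, so its sign is constant. *)

Section Plane.
Context {R : realType}.
Implicit Types (X Y Z : set (R * R)) (x y z : R * R).

Definition segpt (t : R) x y : R * R :=
  ((1 - t) * x.1 + t * y.1, (1 - t) * x.2 + t * y.2).

Definition meet3 X Y Z := exists p, X p /\ Y p /\ Z p.

Lemma meet3_rotate {X Y Z} : meet3 X Y Z -> meet3 Y Z X.
Proof. by move=> [p [Xp [Yp Zp]]]; exists p. Qed.

Lemma convex_segpt X x y t :
  convex_set X -> X x -> X y -> 0 <= t <= 1 -> X (segpt t x y).
Proof. by move=> cX Xx Xy /andP[t0 t1]; exact: cX. Qed.

Lemma segpt_inv {s} x y : s != 0 -> segpt s^-1 x (segpt s x y) = y.
Proof.
by case: x y => [x1 x2] [y1 y2] s0; rewrite /segpt /=; congr pair; field.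
Qed.

Lemma segpt_inv_compl {s} x y :
  1 - s != 0 -> segpt (1 - s)^-1 y (segpt s x y) = x.
Proof.
by case: x y => [x1 x2] [y1 y2] s1; rewrite /segpt /=; congr pair; field.
Qed.

Lemma det3_segpt x y z z' t :
  det3 x y (segpt t z z') = (1 - t) * det3 x y z + t * det3 x y z'.
Proof. by rewrite /det3 /=; ring. Qed.

Lemma det3_rotate x y z : det3 x y z = det3 z x y.
Proof. by rewrite /det3; ring. Qed.

Lemma det3_eq0_segpt {x y z} :
  x != y -> det3 x y z = 0 -> exists s, z = segpt s x y.
Proof.
case: x y z => [x1 x2] [y1 y2] [z1 z2]; rewrite /det3 /segpt /= => xy d0.
have [e1|n1] := eqVneq y1 x1.
- have n2 : y2 - x2 != 0.
    by rewrite subr_eq0; apply: contraNneq xy => ->; rewrite e1.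
  have z1E : z1 = x1.
    by move/eqP: d0; rewrite e1 subrr mul0r sub0r oppr_eq0 mulf_eq0 (negbTE n2)
      subr_eq0 => /eqP.
  by exists ((z2 - x2) / (y2 - x2)); rewrite z1E e1; congr pair; field.
- rewrite -subr_eq0 in n1.
  exists ((z1 - x1) / (y1 - x1)); congr pair; first by field.
  have -> : z2 = ((y1 - x1) * x2 + (y2 - x2) * (z1 - x1)) / (y1 - x1).
    by rewrite -[LHS](mulfK n1); congr (_ / _); lra.
  by field.
Qed.

Lemma det3_neq0 {X Y Z x y z} :
  convex_set X -> convex_set Y -> convex_set Z -> ~ meet3 X Y Z ->
  (Y `&` Z) x -> (X `&` Z) y -> (X `&` Y) z -> det3 x y z != 0.
Proof.
move=> cX cY cZ nt [Yx Zx] [Xy Zy] [Xz Yz]; apply/eqP => d0.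
have xy : x != y by apply/eqP => xy; apply: nt; exists x; rewrite {1}xy.
have [s zE] := det3_eq0_segpt xy d0.
have [s_lt0|s_ge0] := ltP s 0; last have [s_gt1|s_le1] := ltP 1 s.
- have s1 : 1 - s != 0 by rewrite subr_eq0 eq_sym lt_eqF // (lt_trans s_lt0).
  have Xx : X x.
    rewrite -(segpt_inv_compl x y s1) -zE; apply: convex_segpt => //.
    by rewrite invr_ge0 invf_le1; lra.
  by apply: nt; exists x.
- have s0 : s != 0 by rewrite gt_eqF // (lt_trans ltr01).
  have Yy : Y y.
    rewrite -(segpt_inv x y s0) -zE; apply: convex_segpt => //.
    by rewrite invr_ge0 invf_le1; lra.
  by apply: nt; exists y.
- have Zz : Z z by rewrite zE; apply: convex_segpt => //; rewrite s_ge0.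
  by apply: nt; exists z.
Qed.

Lemma sgz_eq_of_no_root (a b : R) :
  (forall t, 0 <= t <= 1 -> (1 - t) * a + t * b != 0) -> sgz a = sgz b.
Proof.
move=> nz.
have a0 : a != 0.
  by have := nz 0; rewrite lexx ler01 subr0 mul1r mul0r addr0; apply.
have b0 : b != 0.
  by have := nz 1; rewrite lexx ler01 subrr mul0r mul1r add0r; apply.
have ab_ge0 : 0 <= a * b.
  rewrite leNgt; apply/negP => ab_lt0.
  have ab : a - b != 0 by apply/eqP => e; nra.
  set t := a / (a - b).
  have ht : t * (a - b) = a by rewrite divfK.
  have t01 : 0 <= t <= 1 by apply/andP; split; nra.
  have : (1 - t) * a + t * b = a - t * (a - b) by ring.
  by rewrite ht subrr => /eqP; apply/negP: (nz t t01).
move: a0 b0 ab_ge0; case: (sgzP a) => ha; case: (sgzP b) => hb //;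
  rewrite ?ha ?hb ?eqxx // => _ _ ab_ge0; exfalso; nra.
Qed.

Lemma opt_transversal_r {X Y Z x y z z'} :
  convex_set X -> convex_set Y -> convex_set Z -> ~ meet3 X Y Z ->
  (Y `&` Z) x -> (X `&` Z) y -> (X `&` Y) z -> (X `&` Y) z' ->
  opt x y z = opt x y z'.
Proof.
move=> cX cY cZ nt YZx XZy [Xz Yz] [Xz' Yz']; apply: sgz_eq_of_no_root => t t01.
rewrite -det3_segpt; apply: det3_neq0 nt YZx XZy _ => //.
by split; apply: convex_segpt.
Qed.

Lemma opt_rotate x y z : opt x y z = opt z x y.
Proof. by rewrite /opt det3_rotate. Qed.

Lemma opt_transversal {X Y Z x y z x' y' z'} :
  convex_set X -> convex_set Y -> convex_set Z -> ~ meet3 X Y Z ->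
  (Y `&` Z) x -> (X `&` Z) y -> (X `&` Y) z ->
  (Y `&` Z) x' -> (X `&` Z) y' -> (X `&` Y) z' ->
  opt x y z = opt x' y' z'.
Proof.
move=> cX cY cZ nt [Yx Zx] [Xy Zy] [Xz Yz] [Yx' Zx'] [Xy' Zy'] [Xz' Yz'].
have ntZXY : ~ meet3 Z X Y by move/meet3_rotate.
have ntYZX : ~ meet3 Y Z X by move/meet3_rotate/meet3_rotate.
rewrite (opt_transversal_r cX cY cZ nt (z' := z')) // opt_rotate.
rewrite (opt_transversal_r cZ cX cY ntZXY (z' := y')) // opt_rotate.
by rewrite (opt_transversal_r cY cZ cX ntYZX (z' := x')) // opt_rotate.
Qed.

Lemma osetE {X Y Z x y z} :
  convex_set X -> convex_set Y -> convex_set Z -> ~ meet3 X Y Z ->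
  (Y `&` Z) x -> (X `&` Z) y -> (X `&` Y) z -> oset X Y Z = opt x y z.
Proof.
move=> cX cY cZ nt YZx XZy XYz; rewrite /oset asboolF //.
exact: opt_transversal cX cY cZ nt (getPex (ex_intro _ _ YZx))
  (getPex (ex_intro _ _ XZy)) (getPex (ex_intro _ _ XYz)) YZx XZy XYz.
Qed.

Lemma oset_meet3 {X Y Z} : meet3 X Y Z -> oset X Y Z = 0.
Proof. by move=> m; rewrite /oset asboolT. Qed.

Lemma oset_eq0 {X Y Z} :
  convex_set X -> convex_set Y -> convex_set Z ->
  Y `&` Z !=set0 -> X `&` Z !=set0 -> X `&` Y !=set0 ->
  oset X Y Z = 0 -> meet3 X Y Z.
Proof.
move=> cX cY cZ [x YZx] [y XZy] [z XYz] o0; apply: contrapT => nt.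
move: o0; rewrite (osetE cX cY cZ nt YZx XZy XYz) /opt => /eqP.
by rewrite sgz_eq0; apply/negP; exact: det3_neq0 cX cY cZ nt YZx XZy XYz.
Qed.

End Plane.

Theorem lemma3 (R : realType) (A B C D : set (R * R)%type) :
  compact_convex A -> compact_convex B -> compact_convex C -> compact_convex D ->
  A `&` B !=set0 -> A `&` C !=set0 -> A `&` D !=set0 ->
  B `&` C !=set0 -> B `&` D !=set0 -> C `&` D !=set0 ->
  oset A B C = 0 -> oset A B D = 0 ->
  oset A C D != 0 -> oset B C D != 0 ->
  oset A C D = oset B C D.
Proof.
move=> [_ cA] [_ cB] [_ cC] [_ cD] AB AC AD BC BD [x CDx] oABC oABD oACD oBCD.
have [p [Ap [Bp Cp]]] := oset_eq0 cA cB cC BC AC AB oABC.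
have [q [Aq [Bq Dq]]] := oset_eq0 cA cB cD BD AD AB oABD.
have ntACD : ~ meet3 A C D by move/oset_meet3/eqP; apply/negP.
have ntBCD : ~ meet3 B C D by move/oset_meet3/eqP; apply/negP.
rewrite (osetE (y := q) (z := p) cA cC cD ntACD CDx) //.
by rewrite (osetE (y := q) (z := p) cB cC cD ntBCD CDx).
Qed.
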